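(* Let $\vdash\subseteq Sqt$ satisfy (A), (Mon), (Cut), (Com), ($\wedge$I), ($\wedge$E), ($\to$0), ($\to$1), ($\to$2). Let $\varphi\in Form$ and $\Gamma,\Delta\subseteq Form$ with $\Delta$ nonempty and closed under $\wedge$ (i.e. $\alpha,\beta\in\Delta\Rightarrow\alpha\wedge\beta\in\Delta$). Then $\Gamma(\Delta,\varphi)$ is $\vdash$-deduction closed, $\Delta\cup\{\varphi\}\subseteq\Gamma(\Delta,\varphi)$, and $\Gamma R_\to\Gamma(\Delta,\varphi)$. Moreover, if $\Gamma$ is $\vdash$-deduction closed, then $\Gamma(\Delta,\varphi)$ is the smallest set of formulas having these three properties (i.e. it is contained in every $\vdash$-deduction closed $\Phi$ with $\Delta\cup\{\varphi\}\subseteq\Phi$ and $\Gamma R_\to\Phi$). In particular (taking $\Delta=Thm=\{\psi:\vdash\psi\}$), for every $\Gamma$ and $\varphi$, $\Gamma(Thm,\varphi)$ is $\vdash$-deduction closed, contains $\varphi$, and $\Gamma R_\to\Gamma(Thm,\varphi)$.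
   Context: $Form$: $\varphi::=p\mid\bot\mid(\varphi\wedge\varphi)\mid(\varphi\to\varphi)$ over a countable set $P0$ ($\wedge$ left-associative, binds tighter than $\to$). Sequents are pairs $(\Gamma,\varphi)$, $\Gamma\subseteq Form$; $\Gamma\vdash\varphi$ means $(\Gamma,\varphi)\in\vdash$, $\psi\vdash\varphi$ means $\{\psi\}\vdash\varphi$, $\vdash\varphi$ means $\emptyset\vdash\varphi$. Rules (for all $\Gamma,\Delta\subseteq Form$, formulas): (A) $\Gamma\cup\{\varphi\}\vdash\varphi$; (Mon) $\Gamma\subseteq\Delta$, $\Gamma\vdash\varphi\Rightarrow\Delta\vdash\varphi$; (Cut) $\Gamma\cup\{\psi\}\vdash\varphi$, $\Delta\vdash\psi\Rightarrow\Gamma\cup\Delta\vdash\varphi$; (Com) $\Gamma\vdash\varphi\Rightarrow\Gamma'\vdash\varphi$ for some finite $\Gamma'\subseteq\Gamma$; ($\wedge$I) $\{\varphi,\psi\}\vdash\varphi\wedge\psi$; ($\wedge$E) $\varphi\wedge\psi\vdash\varphi$ and $\varphi\wedge\psi\vdash\psi$; ($\to$0) $\vdash\varphi\to\varphi$; ($\to$1) $\Gamma\vdash\varphi\Rightarrow\{\psi\to\chi:\chi\in\Gamma\}\vdash\psi\to\varphi$; ($\to$2) $\{\varphi\to\psi,\psi\to\chi\}\vdash\varphi\to\chi$. $\Gamma$ is $\vdash$-deduction closed iff $\Gamma\vdash\psi$ implies $\psi\in\Gamma$. For $\Gamma,\Delta\subseteq Form$: $\Gamma R_\to\Delta$ iff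 for all $\varphi,\psi$, $\varphi\to\psi\in\Gamma$ and $\varphi\in\Delta$ imply $\psi\in\Delta$. $\Gamma(\Delta,\varphi)=\{\psi\in Form:$ there is $\alpha\in\Delta$ with $\Gamma\vdash\alpha\wedge\varphi\to\psi\}$. *)

From Stdlib Require Import List.
Import ListNotations.

(* Propositional atoms: the countable set P0 is represented by nat. *)
Inductive Form : Type :=
| Var : nat -> Form
| Bot : Form
| And : Form -> Form -> Form
| Imp : Form -> Form -> Form.

Definition FSet := Form -> Prop.

Definition subset (G D : FSet) : Prop := forall x, G x -> D x.
Definition union (G D : FSet) : FSet := fun x => G x \/ D x.
Definition sing (p : Form) : FSet := fun x => x = p.
Definition emptyset : FSet := fun _ => False.

(* A consequence relation: a set of sequents (Gamma, phi). *)
Definition Cons := FSet -> Form -> Prop.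

Section Rules.
Variable vd : Cons.

Definition R_A : Prop := forall G p, vd (union G (sing p)) p.
Definition R_Mon : Prop := forall G D p, subset G D -> vd G p -> vd D p.
Definition R_Cut : Prop :=
  forall G D p q, vd (union G (sing q)) p -> vd D q -> vd (union G D) p.
(* finite subset represented by a list *)
Definition R_Com : Prop :=
  forall G p, vd G p -> exists l : list Form,
      (forall x, In x l -> G x) /\ vd (fun x => In x l) p.
Definition R_AndI : Prop := forall p q, vd (fun x => x = p \/ x = q) (And p q).
Definition R_AndE : Prop :=
  forall p q, vd (sing (And p q)) p /\ vd (sing (And p q)) q.
Definition R_Imp0 : Prop := forall p, vd emptyset (Imp p p).
Definition R_Imp1 : Prop :=
  forall G p q, vd G p ->
    vd (fun x => exists c, G c /\ x = Imp q c) (Imp q p).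
Definition R_Imp2 : Prop :=
  forall p q r, vd (fun x => x = Imp p q \/ x = Imp q r) (Imp p r).

Definition AllRules : Prop :=
  R_A /\ R_Mon /\ R_Cut /\ R_Com /\ R_AndI /\ R_AndE /\ R_Imp0 /\ R_Imp1 /\ R_Imp2.

Definition ded_closed (G : FSet) : Prop := forall p, vd G p -> G p.

Definition Thm : FSet := fun p => vd emptyset p.

Definition GammaDP (G D : FSet) (phi : Form) : FSet :=
  fun psi => exists a, D a /\ vd G (Imp (And a phi) psi).

End Rules.

Definition R_imp (G D : FSet) : Prop :=
  forall p q, G (Imp p q) -> D p -> D q.

Definition and_closed (D : FSet) : Prop :=
  forall a b, D a -> D b -> D (And a b).

(* Because Δ is
   closed under ∧ and α∧β∧φ implies both α∧φ and β∧φ, finitely many members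
   share one witness α; by compactness a derivation from Γ(Δ,φ) uses finitely
   many premises, and (→1) followed by cut turns it into Γ ⊢ α∧φ → ψ, so
   Γ(Δ,φ) is deduction closed. Minimality: if Γ ⊢ α∧φ → ψ and Γ is deduction
   closed, the implication lies in Γ, while α∧φ lies in any deduction closed Φ
   containing Δ ∪ {φ}, so ψ ∈ Φ whenever Γ R_→ Φ. *)

From Stdlib Require Import List.

Section Derivations.

Variable vd : Cons.
Hypothesis hA : R_A vd.
Hypothesis hMon : R_Mon vd.
Hypothesis hCut : R_Cut vd.
Hypothesis hCom : R_Com vd.
Hypothesis hAndI : R_AndI vd.
Hypothesis hAndE : R_AndE vd.
Hypothesis hImp0 : R_Imp0 vd.
Hypothesis hImp1 : R_Imp1 vd.
Hypothesis hImp2 : R_Imp2 vd.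

Lemma derivable_mem G p : G p -> vd G p.
Proof.
  intro Gp; apply (hMon (union G (sing p))); [| apply hA].
  now intros x [Gx | ->].
Qed.

Lemma derivable_of_theorem G p : vd emptyset p -> vd G p.
Proof. now apply hMon. Qed.

Lemma derivable_cut_list l G p :
  vd (union G (fun x => In x l)) p -> (forall x, In x l -> vd G x) -> vd G p.
Proof.
  revert G p; induction l as [| a l IHl]; intros G p Hp Hl.
  - refine (hMon _ _ _ _ Hp); now intros x [Gx | []].
  - apply IHl; [| now intros x lx; apply Hl; right].
    assert (Hp' : vd (union (union G (fun x => In x l)) (sing a)) p).
    { refine (hMon _ _ _ _ Hp).
      now intros x [Gx | [<- | lx]]; [left; left | right | left; right]. }
    refine (hMon _ _ _ _ (hCut _ _ _ _ Hp' (Hl a (or_introl eq_refl)))).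
    now intros x [Gx | Gx]; [| left].
Qed.

Lemma derivable_cut_set (H G : FSet) p :
  (forall x, H x -> vd G x) -> vd H p -> vd G p.
Proof.
  intros HG Hp; destruct (hCom _ _ Hp) as [l [lH lp]].
  apply (derivable_cut_list l); [| now intros x lx; apply HG, lH].
  refine (hMon _ _ _ _ lp); now right.
Qed.

Lemma derivable_imp_of_sing G p q : vd (sing p) q -> vd G (Imp p q).
Proof.
  intro pq; refine (derivable_cut_set _ _ _ _ (hImp1 _ _ p pq)).
  intros y [c [-> ->]]; apply derivable_of_theorem, hImp0.
Qed.

Lemma derivable_imp_trans G p q r :
  vd G (Imp p q) -> vd G (Imp q r) -> vd G (Imp p r).
Proof.
  intros pq qr; refine (derivable_cut_set _ _ _ _ (hImp2 p q r)).
  now intros y [-> | ->].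
Qed.

Lemma derivable_and_intro G p q : vd G p -> vd G q -> vd G (And p q).
Proof.
  intros Hp Hq; refine (derivable_cut_set _ _ _ _ (hAndI p q)).
  now intros y [-> | ->].
Qed.

Lemma derivable_and_elim_l G p q : vd G (And p q) -> vd G p.
Proof.
  intro Hpq; refine (derivable_cut_set _ _ _ _ (proj1 (hAndE p q))).
  now intros y ->.
Qed.

Lemma derivable_and_elim_r G p q : vd G (And p q) -> vd G q.
Proof.
  intro Hpq; refine (derivable_cut_set _ _ _ _ (proj2 (hAndE p q))).
  now intros y ->.
Qed.

Lemma imp_and_and_l G a b c : vd G (Imp (And (And a b) c) (And a c)).
Proof.
  apply derivable_imp_of_sing.
  assert (H : vd (sing (And (And a b) c)) (And (And a b) c))
    by now apply derivable_mem.
  apply derivable_and_intro.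
  - exact (derivable_and_elim_l _ _ _ (derivable_and_elim_l _ _ _ H)).
  - exact (derivable_and_elim_r _ _ _ H).
Qed.

Lemma imp_and_and_r G a b c : vd G (Imp (And (And a b) c) (And b c)).
Proof.
  apply derivable_imp_of_sing.
  assert (H : vd (sing (And (And a b) c)) (And (And a b) c))
    by now apply derivable_mem.
  apply derivable_and_intro.
  - exact (derivable_and_elim_r _ _ _ (derivable_and_elim_l _ _ _ H)).
  - exact (derivable_and_elim_r _ _ _ H).
Qed.

Section GammaDP.

Variables (G D : FSet) (phi : Form).
Hypothesis D_nonempty : exists a, D a.
Hypothesis D_and_closed : and_closed D.

Lemma GammaDP_common_witness l :
  (forall x, In x l -> GammaDP vd G D phi x) ->
  exists a, D a /\ forall x, In x l -> vd G (Imp (And a phi) x).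
Proof.
  induction l as [| y l IHl]; intro Hl.
  - destruct D_nonempty as [a Da]; now exists a; split; [| intros x []].
  - destruct IHl as [b [Db Hb]]; [now intros x lx; apply Hl; right |].
    destruct (Hl y (or_introl eq_refl)) as [a [Da Ha]].
    exists (And a b); split; [now apply D_and_closed |].
    intros x [<- | lx].
    + exact (derivable_imp_trans _ _ _ _ (imp_and_and_l _ _ _ _) Ha).
    + exact (derivable_imp_trans _ _ _ _ (imp_and_and_r _ _ _ _) (Hb x lx)).
Qed.

Lemma GammaDP_ded_closed : ded_closed vd (GammaDP vd G D phi).
Proof.
  intros psi Hpsi; destruct (hCom _ _ Hpsi) as [l [lGDP lpsi]].
  destruct (GammaDP_common_witness l lGDP) as [a [Da Ha]].
  exists a; split; [exact Da |].
  refine (derivable_cut_set _ _ _ _ (hImp1 _ _ (And a phi) lpsi)).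
  now intros y [c [lc ->]]; apply Ha.
Qed.

Lemma GammaDP_sup : subset (union D (sing phi)) (GammaDP vd G D phi).
Proof.
  intros x [Dx | ->].
  - exists x; split; [exact Dx |].
    now apply derivable_imp_of_sing, (derivable_and_elim_l _ _ phi), derivable_mem.
  - destruct D_nonempty as [a Da]; exists a; split; [exact Da |].
    now apply derivable_imp_of_sing, (derivable_and_elim_r _ a), derivable_mem.
Qed.

Lemma GammaDP_R_imp : R_imp G (GammaDP vd G D phi).
Proof.
  intros p q Gpq [a [Da Hp]]; exists a; split; [exact Da |].
  now apply (derivable_imp_trans _ _ _ _ Hp), derivable_mem.
Qed.

Lemma GammaDP_least (Phi : FSet) :
  ded_closed vd G -> ded_closed vd Phi -> subset (union D (sing phi)) Phi ->
  R_imp G Phi -> subset (GammaDP vd G D phi) Phi.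
Proof.
  intros G_closed Phi_closed DphiPhi GPhi psi [a [Da Hpsi]].
  apply (GPhi (And a phi)); [now apply G_closed |].
  apply Phi_closed, derivable_and_intro; apply derivable_mem, DphiPhi;
    [left | right]; easy.
Qed.

End GammaDP.

Lemma Thm_nonempty : exists a, Thm vd a.
Proof. exists (Imp Bot Bot); apply hImp0. Qed.

Lemma Thm_and_closed : and_closed (Thm vd).
Proof. intros a b; apply derivable_and_intro. Qed.

End Derivations.

Theorem mainTheorem9 :
  forall vd : Cons, AllRules vd ->
  (forall (G D : FSet) (phi : Form),
     (exists a, D a) -> and_closed D ->
     ded_closed vd (GammaDP vd G D phi)
     /\ subset (union D (sing phi)) (GammaDP vd G D phi)
     /\ R_imp G (GammaDP vd G D phi)
     /\ (ded_closed vd G ->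
         forall Phi : FSet,
           ded_closed vd Phi -> subset (union D (sing phi)) Phi -> R_imp G Phi ->
           subset (GammaDP vd G D phi) Phi))
  /\
  (forall (G : FSet) (phi : Form),
     ded_closed vd (GammaDP vd G (Thm vd) phi)
     /\ GammaDP vd G (Thm vd) phi phi
     /\ R_imp G (GammaDP vd G (Thm vd) phi)).
Proof.
  intros vd [hA [hMon [hCut [hCom [hAndI [hAndE [hImp0 [hImp1 hImp2]]]]]]]].
  assert (general : forall G D phi, (exists a, D a) -> and_closed D ->
    ded_closed vd (GammaDP vd G D phi)
    /\ subset (union D (sing phi)) (GammaDP vd G D phi)
    /\ R_imp G (GammaDP vd G D phi)
    /\ (ded_closed vd G -> forall Phi : FSet,
          ded_closed vd Phi -> subset (union D (sing phi)) Phi -> R_imp G Phi ->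
          subset (GammaDP vd G D phi) Phi)).
  { intros G D phi Dne Dand; split; [| split; [| split]].
    - now apply GammaDP_ded_closed.
    - now apply GammaDP_sup.
    - now apply GammaDP_R_imp.
    - intros G_closed Phi; now apply GammaDP_least. }
  split; [exact general |].
  intros G phi.
  destruct (general G (Thm vd) phi) as [closed [sup [Rimp _]]].
  - now apply Thm_nonempty.
  - now apply Thm_and_closed.
  - now split; [| split; [apply sup; right |]].
Qed.
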